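(* For all $n>0$ and all $P\in T_{n,0,1}$, $\mathrm{word}(\phi_{n,0,1}(P))=\mathrm{flip}\circ\mathrm{rev}\circ\mathrm{sw}^-_{1,-1}(\mathrm{word}(P))$.
   Context: Words over $\{\mathrm{N},\mathrm{E}\}$ are identified with lattice paths from $(0,0)$ (N = unit north step, E = unit east step); $\mathrm{word}(P)$ is the word of a path $P$. $\mathrm{rev}(w_1\cdots w_n)=w_n\cdots w_1$, and $\mathrm{flip}$ interchanges the letters $\mathrm{N}$ and $\mathrm{E}$. The levels of a word $w=w_1\cdots w_n$ for $\mathrm{sw}^-_{1,-1}$ are $l_0=0$, $l_i=l_{i-1}+1$ if $w_i=\mathrm{N}$, $l_i=l_{i-1}-1$ if $w_i=\mathrm{E}$. $\mathrm{sw}^-_{1,-1}(w)$ is obtained by: for $k=-1,-2,\ldots$ and then $k=\ldots,2,1,0$ (all negative values in decreasing order, then all nonnegative values in decreasing order), scan $w$ from right to left and append each letter $w_i$ ($i\ge1$) with $l_i=k$. $T_{n,0,1}$ is the set of lattice paths from $(0,0)$ to $(n,n)$ with unit north and east steps that never go strictly to the right of the line $x=y$. For $P\in T_{n,0,1}$, its area vector is $g(P)=(g_0,\ldots,g_{n-1})$ where $g_i$ is the number of complete unit squares in the strip $\{x\ge0,\ i\le y\le i+1\}$ lying to the right of $P$ and to the left of the line $x=y$. For $i\ge0$ let $z^{(i)}$ be the subsequence of $g(P)$ of entries in $\{i,i-1\}$, let $M$ be the largest $i$ with $z^{(i)}$ nonempty, and let $\sigma^{(i)}$ be obtained from $z^{(i)}$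 by replacing each $i$ by $\mathrm{N}$ and each $i-1$ by $\mathrm{E}$. Then $\phi_{n,0,1}(P)$ is the path with word $\sigma^{(0)}\sigma^{(1)}\cdots\sigma^{(M)}$. *)

From mathcomp Require Import all_boot all_order all_algebra.
Set Implicit Arguments. Unset Strict Implicit. Unset Printing Implicit Defensive.
Import GRing.Theory Num.Theory.

Inductive letter := North | East.

Definition isN (a : letter) : bool := if a is North then true else false.
Definition isE (a : letter) : bool := if a is East then true else false.

Definition flip (a : letter) : letter := if a is North then East else North.
Definition flipw (w : seq letter) : seq letter := map flip w.

(* A path from (0,0) is identified with its word; rev is seq's rev. *)

(* T_{n,0,1}: words with n N's and n E's (path from (0,0) to (n,n)) that never
   go strictly to the right of x = y, i.e. every prefix has #E <= #N. *)
Definition inT (n : nat) (w : seq letter) : bool :=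
  [&& count isN w == n, count isE w == n &
      all (fun j => count isE (take j w) <= count isN (take j w))
          (iota 0 (size w).+1)].

Definition level (w : seq letter) (i : nat) : int :=
  ((count isN (take i w))%:Z - (count isE (take i w))%:Z)%R.

Definition level_block (w : seq letter) (k : int) : seq letter :=
  [seq nth North w i.-1 | i <- rev (iota 1 (size w)) & level w i == k].

(* sw^-_{1,-1}: negative levels -1,-2,... (decreasing), then nonnegative levels
   in decreasing order down to 0.  All levels lie in [-size w, size w]. *)
Definition sw (w : seq letter) : seq letter :=
  flatten [seq level_block w (- (k%:Z))%R | k <- iota 1 (size w)] ++
  flatten [seq level_block w (k%:Z) | k <- rev (iota 0 (size w).+1)].

(* The i-th north step (0-based) of the path goes from
   (x_i, i) to (x_i, i+1), where x_i is the number of E's before it.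
   g_i = number of unit squares [j,j+1]x[i,i+1] (j >= 0) to the right of P
   (j >= x_i) and to the left of x = y (j + 1 <= i). *)
Definition area_vector (w : seq letter) : seq nat :=
  [seq (let x := count isE (take p w) in
        let i := count isN (take p w) in
        count (fun j => (x <= j) && (j.+1 <= i)) (iota 0 (size w)))
  | p <- iota 0 (size w) & isN (nth East w p)].

Definition sigma (g : seq nat) (i : nat) : seq letter :=
  [seq (if a == i then North else East) | a <- g & (a == i) || (a.+1 == i)].

(* M = largest i with z^{(i)} nonempty *)
Definition Mmax (g : seq nat) : nat :=
  \max_(i < (\max_(a <- g) a).+2 | has (fun a : nat => (a == val i) || (a.+1 == val i)) g) val i.

Definition phi (w : seq letter) : seq letter :=
  let g := area_vector w in flatten [seq sigma g i | i <- iota 0 (Mmax g).+1].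

From mathcomp Require Import all_boot all_order all_algebra.
From mathcomp Require Import zify.
Set Implicit Arguments.
Unset Strict Implicit.
Unset Printing Implicit Defensive.

Import Order.TTheory GRing.Theory Num.Theory.

(* On a path weakly above the diagonal the area entry of a north step is its
   starting level, so sigma^(k) lists the north steps leaving level k (as N)
   or level k-1 (as E), whereas the flipped k-th block of sw lists the steps
   arriving at level k, east ones as N and north ones as E.  Steps k-1 -> k
   give the same E in both words; ascents k -> k+1 and descents k+1 -> k
   alternate with no step k-1 -> k in between, as the path stays above k
   meanwhile, and every ascent is closed because the path ends at level 0. *)

Lemma iotaSr m n : iota m n.+1 = rcons (iota m n) (m + n).
Proof. by rewrite -addn1 iotaD cats1. Qed.

Lemma map_filter_iota0Sr T (P P' : pred nat) (f f' : nat -> T) m :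
    (forall p, p < m -> P p = P' p) -> (forall p, p < m -> f p = f' p) ->
  [seq f p | p <- iota 0 m.+1 & P p] =
  [seq f' p | p <- iota 0 m & P' p] ++ (if P m then [:: f m] else [::]).
Proof.
move=> eq_P eq_f; rewrite iotaSr filter_rcons.
have -> : [seq p <- iota 0 m | P p] = [seq p <- iota 0 m | P' p].
  by apply: eq_in_filter => p; rewrite mem_iota => /andP[_ /eq_P].
have eq_map_f : [seq f p | p <- iota 0 m & P' p] = [seq f' p | p <- iota 0 m & P' p].
  by apply/eq_in_map => p; rewrite mem_filter mem_iota => /and3P[_ _ /eq_f].
by case: ifP => _; rewrite ?map_rcons eq_map_f -?cats1 ?cats0.
Qed.

Definition step (a : letter) : int := if a is North then 1 else -1.

Lemma level_rcons v a p : p <= size v -> level (rcons v a) p = level v p.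
Proof. by move=> le_p; rewrite /level -cats1 takel_cat. Qed.

Lemma level_rcons_size v a :
  level (rcons v a) (size v).+1 = (level v (size v) + step a)%R.
Proof.
rewrite /level -cats1 take_oversize ?size_cat ?addn1 // take_size !count_cat.
by case: a => /=; lia.
Qed.

Lemma level_le_size w i : (level w i <= (size w)%:Z)%R.
Proof.
rewrite /level; have := count_size isN (take i w); rewrite size_take_min; lia.
Qed.

Definition north_block (k : int) (w : seq letter) : seq letter :=
  [seq (if level w p == k then North else East) | p <- iota 0 (size w) &
     isN (nth East w p) && ((level w p == k) || (level w p + 1 == k)%R)].

Definition arrival_block (k : int) (w : seq letter) : seq letter :=
  [seq flip (nth North w p) | p <- iota 0 (size w) & level w p.+1 == k].

Lemma north_block_rcons k v a : let e := level v (size v) in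
  north_block k (rcons v a) = north_block k v ++
    (if isN a && ((e == k) || (e + 1 == k)%R)
     then [:: if e == k then North else East] else [::]).
Proof.
rewrite /north_block size_rcons.
erewrite map_filter_iota0Sr => [|p lt_p|p lt_p].
- by rewrite nth_rcons ltnn eqxx level_rcons.
- by rewrite nth_rcons lt_p level_rcons // ltnW.
- by rewrite level_rcons // ltnW.
Qed.

Lemma arrival_block_rcons k v a :
  arrival_block k (rcons v a) = arrival_block k v ++
    (if (level v (size v) + step a == k)%R then [:: flip a] else [::]).
Proof.
rewrite /arrival_block size_rcons.
erewrite map_filter_iota0Sr => [|p lt_p|p lt_p].
- by rewrite nth_rcons ltnn eqxx level_rcons_size.
- by rewrite level_rcons.
- by rewrite nth_rcons lt_p.
Qed.

Lemma north_block_arrival_block (k : int) w : (0 <= k)%R ->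
  north_block k w =
  arrival_block k w ++ (if (k < level w (size w))%R then [:: North] else [::]).
Proof.
move=> ge0_k; elim/last_ind: w => [|v a IH].
  by rewrite /level /= subrr ltNge ge0_k.
rewrite north_block_rcons arrival_block_rcons size_rcons level_rcons_size IH -!catA.
congr (_ ++ _); set e := level v (size v).
by case: a => /=; repeat case: ifPn => ?; rewrite //=; exfalso; lia.
Qed.

Lemma flip_rev_level_block k w : flipw (rev (level_block w k)) = arrival_block k w.
Proof.
by rewrite /level_block /flipw /arrival_block filter_rev !map_rev revK
  (iotaDl 1 0) filter_map -!map_comp.
Qed.

Lemma level_block_eq_nil w k : (forall i, level w i != k) -> level_block w k = [::].
Proof.
move=> neq_k; rewrite /level_block (@eq_filter _ _ pred0) ?filter_pred0 //.
by move=> i; apply/negbTE.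
Qed.

Definition dyck (w : seq letter) : Prop :=
  forall p, count isE (take p w) <= count isN (take p w).

Lemma inT_dyck n w : inT n w -> dyck w.
Proof.
case/and3P => _ _ /allP prefixes p; have [le_p | lt_p] := leqP p (size w).
  by apply: prefixes; rewrite mem_iota.
rewrite take_oversize ?(ltnW lt_p) //.
by rewrite -(take_size w); apply: prefixes; rewrite mem_iota add0n ltnSn.
Qed.

Lemma inT_level_size n w : inT n w -> level w (size w) = 0%R.
Proof. by case/and3P => /eqP cN /eqP cE _; rewrite /level take_size cN cE subrr. Qed.

Lemma count_iota_window x i m :
  count (fun j => x <= j < i) (iota 0 m) = minn m i - minn m x.
Proof.
elim: m => [|m IH]; first by rewrite !min0n.
by rewrite iotaSr -cats1 count_cat IH /=; case: leqP; case: ltnP; lia.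
Qed.

Lemma sigma_area_vector (k : nat) w : dyck w -> sigma (area_vector w) k = north_block k w.
Proof.
move=> dw; rewrite /sigma /area_vector /north_block filter_map -map_comp -filter_predI.
set area := fun p => count _ _.
have areaE p : Posz (area p) = level w p.
  rewrite /area count_iota_window /level.
  have := dw p; have := count_size isN (take p w); rewrite size_take_min; lia.
have eq_area p : (area p == k) = (level w p == k).
  by rewrite -areaE.
have eq_areaS p : ((area p).+1 == k) = (level w p + 1 == k)%R.
  by rewrite -areaE; apply/eqP/eqP; lia.
under eq_filter => p do rewrite /= eq_area eq_areaS andbC.
by apply: eq_map => p /=; rewrite eq_area.
Qed.

Lemma sigma_gt_Mmax g i : Mmax g < i -> sigma g i = [::].
Proof.
move=> lt_M_i; rewrite /sigma.
suff : ~~ has (fun a : nat => (a == i) || (a.+1 == i)) g.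
  by rewrite has_filter negbK => /eqP ->.
apply/negP => has_i; have [a g_a a_i] := hasP has_i.
have le_a : a <= \max_(b <- g) b by exact: (leq_bigmax_seq (P := predT)).
have lt_i : i < (\max_(b <- g) b).+2 by case/orP: a_i => /eqP <-; lia.
have := @leq_bigmax_cond _
  (fun j : 'I__ => has (fun b : nat => (b == val j) || (b.+1 == val j)) g)
  val (Ordinal lt_i) has_i.
by rewrite /= leqNgt -/(Mmax g) lt_M_i.
Qed.

Lemma flatten_map_nil (T : eqType) U (f : T -> seq U) (s : seq T) :
  {in s, forall x, f x = [::]} -> flatten (map f s) = [::].
Proof.
elim: s => //= x s IH f_nil; rewrite f_nil ?mem_head // IH // => y s_y.
by apply: f_nil; rewrite inE s_y orbT.
Qed.

Lemma flatten_map_iota_trunc T (f : nat -> seq T) m n :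
    (forall i, m <= i -> f i = [::]) -> m <= n ->
  flatten (map f (iota 0 n)) = flatten (map f (iota 0 m)).
Proof.
move=> f_nil le_mn; rewrite -(subnKC le_mn) iotaD map_cat flatten_cat.
rewrite (@flatten_map_nil _ _ f (iota _ (n - m))) ?cats0 // => i.
by rewrite mem_iota add0n => /andP[/f_nil].
Qed.

Theorem mainTheorem3 (n : nat) (w : seq letter) :
  0 < n -> inT n w -> phi w = flipw (rev (sw w)).
Proof.
move=> _ w_inT; have dw := inT_dyck w_inT; set M := Mmax (area_vector w).
set F := fun k : nat => flipw (rev (level_block w k%:Z)).
have sigmaE k : sigma (area_vector w) k = F k.
  rewrite /F flip_rev_level_block sigma_area_vector // north_block_arrival_block //.
  by rewrite (inT_level_size w_inT) ltNge le0z_nat cats0.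
have swE : flipw (rev (sw w)) = flatten (map F (iota 0 (size w).+1)).
  rewrite /sw flatten_map_nil ?cat0s => [|k]; last first.
    rewrite mem_iota => /andP[gt0_k _]; apply: level_block_eq_nil => i.
    by have := dw i; rewrite /level; lia.
  by rewrite rev_flatten -map_comp map_rev revK /flipw map_flatten -map_comp.
have F_gt_size k : (size w).+1 <= k -> F k = [::].
  move=> lt_k; rewrite /F level_block_eq_nil // => i.
  by have := level_le_size w i; lia.
have F_gt_M k : M.+1 <= k -> F k = [::].
  by move=> lt_k; rewrite -sigmaE sigma_gt_Mmax.
rewrite /phi; cbv zeta; rewrite (eq_map sigmaE) swE.
rewrite -(flatten_map_iota_trunc F_gt_M (leq_maxl _ (size w).+1)).
by rewrite -(flatten_map_iota_trunc F_gt_size (leq_maxr M.+1 _)).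
Qed.
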